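(* Let $A,B$ be finite nonempty subsets of an abelian group $\mathbf G$ and let $k\ge1$ be an integer. Suppose $|A-A|\le K|A|$ and $\mathsf E_{2k+2}(A)=M|A|^{2k+3}/K^{2k+1}$ for some $K,M>0$. Then there exist a set $T\subseteq A-A$ with $|T|\ge K|A|/(16M)$ and an element $u\in\mathbf G$ such that for every $t\in T+u$, $$\sum_{x\in\mathbf G}\big|(A*B)(x)-(A*B)(x+t)\big|^2\le 32|A|^2|B|/k.$$
   Context: Sets are identified with their indicator functions; $(A*B)(x)=\sum_{y}A(y)B(x-y)$. $(A\circ A)(x)=|\{(a,b)\in A^2:b-a=x\}|$ and $\mathsf E_j(A)=\sum_x(A\circ A)(x)^j$. *)

From HB Require Import structures.
From mathcomp Require Import all_boot all_order all_algebra.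
From mathcomp Require Import finmap.
Set Implicit Arguments. Unset Strict Implicit. Unset Printing Implicit Defensive.
Import Order.TTheory GRing.Theory Num.Theory.
Local Open Scope fset_scope.
Local Open Scope ring_scope.

Section Additive.
Variable G : zmodType.

Definition sumset (A B : {fset G}) : {fset G} := [fset a + b | a in A, b in B].
Definition diffset (A : {fset G}) : {fset G} := [fset a - b | a in A, b in A].

(* (A * B)(x) = sum_y A(y) B(x - y) = #{ y in A : x - y in B } *)
Definition conv (A B : {fset G}) (x : G) : nat :=
  #|` [fset y in A | x - y \in B] |.

Definition dcorr (A : {fset G}) (x : G) : nat :=
  #|` [fset p in A `*` A | p.2 - p.1 == x] |.

(* E_j(A) = sum_x (A o A)(x)^j ; the summand vanishes outside A - A for j >= 1 *)
Definition energy (j : nat) (A : {fset G}) : nat :=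
  (\sum_(x <- diffset A) (dcorr A x) ^ j)%N.

(* sum_{x in G} |(A*B)(x) - (A*B)(x+t)|^2 ; the summand vanishes outside
   (A+B) \cup ((A+B) - t), so the sum is taken over that finite set *)
Definition shift_sq (R : numDomainType) (A B : {fset G}) (t : G) : R :=
  \sum_(x <- sumset A B `|` [fset z - t | z in sumset A B])
     `| (conv A B x)%:R - (conv A B (x + t))%:R | ^+ 2.
End Additive.

From HB Require Import structures.
From mathcomp Require Import all_boot all_order all_algebra.
From mathcomp Require Import finmap.
From mathcomp Require Import ring lra zify.
Import Order.TTheory GRing.Theory Num.Theory.
Set Implicit Arguments. Unset Strict Implicit. Unset Printing Implicit Defensive.
Local Open Scope fset_scope.
Local Open Scope ring_scope.

(* Average over all tuples a in A^(k+1), i.e. draw a_0, ..., a_k independently and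
   uniformly from A.  The estimator  x |-> |A|/(k+1) * sum_i B(x - a_i)  of (A*B)(x)
   then has mean total squared error at most V = |A|^2|B|/(k+1), so at least half of
   the tuples are good (error at most 2V).  If a' = a + t for two good tuples, the
   triangle inequality bounds the shift sum at t by 8V <= 32|A|^2|B|/k.  A tuple is
   determined up to translation by its differences a_i - a_0 in (A-A)^k, so
   Cauchy-Schwarz yields at least (|A|^(k+1)/2)^2 / |A-A|^k pairs of good translates;
   a translate t carries at most (A o A)(t)^(k+1) of them, and a second Cauchy-Schwarz
   against E_(2k+2)(A) shows that at least K|A|/(16M) distinct t occur.  Take u = 0. *)

Lemma sum_nat_eq_mem (T : eqType) (s : seq T) (c : T) :
  uniq s -> (\sum_(x <- s) (x == c))%N = (c \in s).
Proof.
move=> s_uniq; rewrite -count_uniq_mem // -sum1_count [RHS]big_mkcond /=.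
by apply: eq_bigr => x _; rewrite eq_sym; case: (c == x).
Qed.

Lemma card_fset_sep (T : choiceType) (D : {fset T}) (P : pred T) :
  #|` [fset x in D | P x]| = (\sum_(x <- D) P x)%N.
Proof. by rewrite card_fset_sum1 -big_fset_condE big_mkcond. Qed.

Lemma nat_of_forall (I : finType) (P : pred I) : [forall i, P i] = (\prod_i P i)%N :> nat.
Proof.
case: (boolP [forall i, P i]) => [/forallP P_all | /forallPn[i /negPf Pi_false]].
  by rewrite big1 // => i _; rewrite P_all.
by rewrite (bigD1 i) //= Pi_false mul0n.
Qed.

Section NonnegSums.
Variable R : numDomainType.

Lemma ler_sum_fsubset (T : choiceType) (D S : {fset T}) (F : T -> R) :
  D `<=` S -> (forall x, 0 <= F x) -> \sum_(x <- D) F x <= \sum_(x <- S) F x.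
Proof.
move=> DS F_ge0; rewrite [leRHS](big_fsetID _ (mem D)) /=.
have -> : [fset x in S | x \in D] = D.
  by apply/fsetP => x; rewrite !inE andb_idl // => /(fsubsetP DS).
by rewrite lerDl sumr_ge0.
Qed.

Lemma ler_sum_support (T : choiceType) (D S : {fset T}) (F : T -> R) :
  (forall x, 0 <= F x) -> (forall x, x \notin S -> F x = 0) ->
  \sum_(x <- D) F x <= \sum_(x <- S) F x.
Proof.
move=> F_ge0 F_supp; rewrite [leRHS](big_fset_incl _ (fsubsetUr D S)).
  exact/ler_sum_fsubset/F_ge0/fsubsetUl.
by move=> x _; apply: F_supp.
Qed.

Lemma ler_sum_support_shift (G : zmodType) (D S : {fset G}) (t : G) (F : G -> R) :
  (forall x, 0 <= F x) -> (forall x, x \notin S -> F x = 0) ->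
  \sum_(x <- D) F (x + t) <= \sum_(x <- S) F x.
Proof.
move=> F_ge0 F_supp.
have -> : \sum_(x <- D) F (x + t) = \sum_(y <- [fset x + t | x in D]) F y.
  by rewrite big_imfset //= => x y _ _ /addIr.
exact: ler_sum_support.
Qed.

Lemma ler_card_gt_sum (T : finType) (F : T -> R) (c : R) :
  (forall x, 0 <= F x) -> c *+ #|[set x | c < F x]| <= \sum_x F x.
Proof.
move=> F_ge0; rewrite -sumr_const.
apply: le_trans (_ : _ <= \sum_(x in [set x | c < F x]) F x) _.
  by apply: ler_sum => x; rewrite inE => /ltW.
by rewrite [leRHS](bigID (mem [set x | c < F x])) /= lerDl sumr_ge0.
Qed.
End NonnegSums.

Lemma cauchy_schwarz_sum (R : realDomainType) (I : Type) (r : seq I) (x y : I -> R) :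
  (\sum_(i <- r) x i * y i) ^+ 2 <= (\sum_(i <- r) x i ^+ 2) * (\sum_(i <- r) y i ^+ 2).
Proof.
have two_prod_le i j : 2 * (x i * y i * (x j * y j)) <= x i ^+ 2 * y j ^+ 2 + x j ^+ 2 * y i ^+ 2.
  rewrite -subr_ge0.
  have -> : x i ^+ 2 * y j ^+ 2 + x j ^+ 2 * y i ^+ 2 - 2 * (x i * y i * (x j * y j))
     = (x i * y j - x j * y i) ^+ 2 by ring.
  exact: sqr_ge0.
rewrite -(@ler_pM2l _ 2) // expr2 big_distrlr /= mulr_sumr.
have -> : 2 * ((\sum_(i <- r) x i ^+ 2) * (\sum_(i <- r) y i ^+ 2)) =
  \sum_(i <- r) \sum_(j <- r) (x i ^+ 2 * y j ^+ 2 + x j ^+ 2 * y i ^+ 2).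
  rewrite mulr_natl mulr2n.
  under [RHS]eq_bigr do rewrite big_split /=.
  by rewrite big_split /= big_distrlr /= [in X in _ + X]exchange_big.
by apply: ler_sum => i _; rewrite mulr_sumr; apply: ler_sum => j _; apply: two_prod_le.
Qed.

Lemma cauchy_schwarz_sumn (I : Type) (r : seq I) (x y : I -> nat) :
  ((\sum_(i <- r) x i * y i) ^ 2 <= (\sum_(i <- r) x i ^ 2) * (\sum_(i <- r) y i ^ 2))%N.
Proof.
rewrite -(ler_nat rat) natrX natrM !natr_sum.
under eq_bigr do rewrite natrM.
under [X in _ <= X * _]eq_bigr do rewrite natrX.
under [X in _ <= _ * X]eq_bigr do rewrite natrX.
exact: cauchy_schwarz_sum.
Qed.

Lemma card_sqr_le_collisions (T C : finType) (L : {pred T}) (f : T -> C) :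
  (#|L| ^ 2 <= #|C| * \sum_(a in L) \sum_(a' in L) (f a == f a'))%N.
Proof.
pose fiber c := #|[pred a in L | f a == c]|.
have sum_fiber : (\sum_c fiber c = #|L|)%N.
  rewrite -sum1_card (partition_big f xpredT) //=; apply: eq_bigr => c _.
  by rewrite sum1_card.
have sum_fiber_sqr : (\sum_c fiber c ^ 2 = \sum_(a in L) \sum_(a' in L) (f a == f a'))%N.
  rewrite (partition_big f xpredT) //=; apply: eq_bigr => c _.
  rewrite /fiber -sum1_card -mulnn big_distrlr /=; apply: eq_bigr => a /andP[_ /eqP fa].
  rewrite (eq_bigr (fun=> 1%N)) // sum1_card.
  rewrite (eq_bigr (fun a' => if f a' == c then 1 else 0)%N) => [|a' _]; last first.
    by rewrite fa eq_sym; case: eqP.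
  by rewrite -big_mkcondr -sum1_card; apply: eq_bigl => a'; rewrite inE.
rewrite -sum_fiber -sum_fiber_sqr.
have := cauchy_schwarz_sumn (index_enum C) (fun=> 1%N) fiber.
rewrite (eq_bigr fiber) => [|c _]; last exact: mul1n.
by rewrite /= sum1_card.
Qed.

Section FfunSums.
Variables (I J : finType) (R : comNzSemiRingType).

Lemma sum_ffun_app (i : I) (h : J -> R) :
  \sum_(a : {ffun I -> J}) h (a i) = (\sum_y h y) * #|J|%:R ^+ #|I|.-1.
Proof.
pose F (l : I) (y : J) := if l == i then h y else 1.
have -> : \sum_(a : {ffun I -> J}) h (a i) = \sum_(a : {ffun I -> J}) \prod_l F l (a l).
  apply: eq_bigr => a _; rewrite (bigD1 i) //= /F eqxx big1 ?mulr1 //.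
  by move=> l /negPf ->.
rewrite -bigA_distr_bigA (bigD1 i) //= /F eqxx; congr (_ * _).
rewrite (eq_bigr (fun _ => #|J|%:R)) ?prodr_const ?cardC1 // => l /negPf ->.
by rewrite sumr_const.
Qed.

Lemma sum_ffun_app2_eq0 (i i' : I) (h h' : J -> R) : i != i' -> \sum_y h y = 0 ->
  \sum_(a : {ffun I -> J}) h (a i) * h' (a i') = 0.
Proof.
move=> /negPf neq_ii' sum_h0.
pose F (l : I) (y : J) := if l == i then h y else if l == i' then h' y else 1.
have -> : \sum_(a : {ffun I -> J}) h (a i) * h' (a i') = \sum_(a : {ffun I -> J}) \prod_l F l (a l).
  apply: eq_bigr => a _; rewrite (bigD1 i) //= (bigD1 i') /= ?[i' == i]eq_sym ?neq_ii' //.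
  rewrite /F eqxx eq_sym neq_ii' eqxx big1 ?mulr1 // => l /andP[/negPf -> /negPf ->].
  by [].
by rewrite -bigA_distr_bigA (bigD1 i) //= /F eqxx sum_h0 mul0r.
Qed.
Lemma sum_ffun_sqr_sum (z : J -> R) :
  \sum_y z y = 0 ->
  \sum_(a : {ffun I -> J}) (\sum_i z (a i)) ^+ 2 = (\sum_y z y ^+ 2) * #|J|%:R ^+ #|I|.-1 *+ #|I|.
Proof.
move=> sum_z0.
under eq_bigr do rewrite expr2 big_distrlr /=.
rewrite exchange_big /= -sumr_const; apply: eq_bigr => i _.
rewrite exchange_big /= (bigD1 i) //= [X in _ + X]big1 ?addr0.
  by rewrite -(sum_ffun_app i (fun y => z y ^+ 2)); under [RHS]eq_bigr do rewrite expr2.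
by move=> i' ii'; apply: sum_ffun_app2_eq0; rewrite // eq_sym.
Qed.

End FfunSums.

Section Additive.
Variable G : zmodType.
Implicit Types (A B : {fset G}) (x y z t : G).

Lemma mem_sumset A B y z : y \in A -> z \in B -> y + z \in sumset A B.
Proof. by move=> yA zB; apply/imfset2P; exists y => //; exists z. Qed.

Lemma mem_diffset A y z : y \in A -> z \in A -> y - z \in diffset A.
Proof. by move=> yA zA; apply/imfset2P; exists y => //; exists z. Qed.

Lemma convE A B x : conv A B x = (\sum_(y <- A) ((x - y)%R \in B))%N.
Proof. by rewrite /conv card_fset_sep. Qed.

Lemma dcorrE A t : dcorr A t = (\sum_(y <- A) ((y + t)%R \in A))%N.
Proof.
rewrite /dcorr card_fset_sep /fsetM big_imfset2 /=; last by move=> [a b] [c d] _ _ /= [-> ->].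
apply: eq_bigr => y _; rewrite -(sum_nat_eq_mem (y + t) (fset_uniq A)).
by apply: eq_bigr => z _ /=; rewrite subr_eq addrC.
Qed.

Lemma sum_conv A B : (\sum_(x <- sumset A B) conv A B x = #|` A| * #|` B|)%N.
Proof.
under eq_bigr do rewrite convE.
rewrite exchange_big /= card_fset_sum1 big_distrl /=; apply: eq_big_seq => y yA.
rewrite -card_fset_sep mul1n.
have -> : [fset x in sumset A B | (x - y)%R \in B] = [fset z + y | z in B].
  apply/fsetP => x; rewrite !inE /=; apply/andP/imfsetP => [[_ xyB] | [z zB ->]].
    by exists (x - y) => //; rewrite subrK.
  by rewrite addrK (addrC z) mem_sumset.
by rewrite card_imfset //; apply: addIr.
Qed.
End Additive.

Section Translates.
Variables (G : zmodType) (A : {fset G}) (m : nat).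
Local Notation tuple := {ffun 'I_m.+1 -> A}.

Definition is_translate (a a' : tuple) (t : G) : bool :=
  [forall i, val (a' i) == val (a i) + t].

Definition diffs (a : tuple) : {ffun 'I_m -> diffset A} :=
  [ffun i => [` mem_diffset (fsvalP (a (lift ord0 i))) (fsvalP (a ord0))]].

Lemma is_translate_diffs a a' t : is_translate a a' t -> diffs a = diffs a'.
Proof.
move=> /forallP aa't; apply/ffunP => i; apply/val_inj; rewrite !ffunE /=.
by rewrite (eqP (aa't (lift ord0 i))) (eqP (aa't ord0)) opprD addrACA subrr addr0.
Qed.

Lemma diffs_is_translate a a' :
  diffs a = diffs a' -> is_translate a a' (val (a' ord0) - val (a ord0)).
Proof.
move=> diffs_eq; apply/forallP => i; case: (unliftP ord0 i) => [l ->|->]; last first.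
  by rewrite addrC subrK.
have /= := congr1 (fun d : {ffun 'I_m -> diffset A} => val (d l)) diffs_eq; rewrite !ffunE /= => e.
by apply/eqP; rewrite -[val (a' (lift _ _))](subrK (val (a' ord0))) -e addrAC addrA.
Qed.

Lemma sum_is_translate a a' :
  (\sum_(t <- diffset A) is_translate a a' t)%N = (diffs a == diffs a').
Proof.
case: eqVneq => [diffs_eq | diffs_neq]; last first.
  rewrite big1 // => t _; case: (boolP (is_translate _ _ _)) => // /is_translate_diffs.
  by move/eqP; rewrite (negPf diffs_neq).
rewrite (eq_bigr (fun t => (t == val (a' ord0) - val (a ord0)) : nat)) => [|t _].
  by rewrite sum_nat_eq_mem ?fset_uniq // mem_diffset ?fsvalP.
have := diffs_is_translate diffs_eq; case: (boolP (is_translate a a' t)) => [/forallP aa't _|].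
  by rewrite (eqP (aa't ord0)) addrC addKr eqxx.
by move=> /negPf not_tr; case: eqP => // <-; rewrite not_tr.
Qed.

Variable L : {set tuple}.

Definition translate_pairs (t : G) : nat :=
  \sum_(a in L) \sum_(a' in L) is_translate a a' t.

Definition popular_translates : {fset G} :=
  [fset t in diffset A | 0 < translate_pairs t]%N.

Lemma sum_translate_pairs : (\sum_(t <- diffset A) translate_pairs t =
  \sum_(a in L) \sum_(a' in L) (diffs a == diffs a'))%N.
Proof.
rewrite exchange_big; apply: eq_bigr => a _; rewrite exchange_big.
by apply: eq_bigr => a' _; rewrite sum_is_translate.
Qed.

Lemma card_sqr_le_translate_pairs :
  (#|L| ^ 2 <= #|` diffset A| ^ m * \sum_(t <- diffset A) translate_pairs t)%N.
Proof.
have := card_sqr_le_collisions L diffs.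
by rewrite sum_translate_pairs card_ffun card_ord -cardfE.
Qed.

Lemma translate_pairs_le_dcorr t : (translate_pairs t <= dcorr A t ^ m.+1)%N.
Proof.
have sum_translates a :
    (\sum_(a' : tuple) is_translate a a' t = \prod_i ((val (a i) + t)%R \in A))%N.
  rewrite (eq_bigr (fun a' : tuple => \prod_i (val (a' i) == val (a i) + t)%R : nat)%N);
    last by move=> a' _; rewrite nat_of_forall.
  rewrite -(bigA_distr_bigA (fun i (y : A) => (val y == val (a i) + t)%R : nat)).
  by apply: eq_bigr => i _; rewrite -sum_nat_eq_mem ?fset_uniq // big_seq_fsetE.
apply: (@leq_trans (\sum_(a : tuple) \sum_(a' : tuple) is_translate a a' t)).
  rewrite [leqLHS]big_mkcond leq_sum // => a _.
  case: (a \in L) => //; rewrite [leqLHS]big_mkcond leq_sum // => a' _.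
  by case: (a' \in L).
under eq_bigr do rewrite sum_translates.
rewrite -(bigA_distr_bigA (fun i (y : A) => (val y + t)%R \in A : nat)) /=.
by rewrite prod_nat_const card_ord dcorrE big_seq_fsetE.
Qed.

Lemma sqr_sum_translate_pairs_le :
  ((\sum_(t <- diffset A) translate_pairs t) ^ 2
     <= #|` popular_translates| * energy (2 * m + 2) A)%N.
Proof.
have ind_mul t : ((0 < translate_pairs t) * translate_pairs t = translate_pairs t)%N.
  by case: translate_pairs => // n; rewrite mul1n.
have ind_sqr t : ((0 < translate_pairs t) ^ 2 = (0 < translate_pairs t))%N.
  by case: (0 < _)%N.
have := cauchy_schwarz_sumn (diffset A) (fun t => (0 < translate_pairs t)%N : nat) translate_pairs.
rewrite (eq_bigr _ (fun t _ => ind_mul t)) (eq_bigr _ (fun t _ => ind_sqr t)) -card_fset_sep.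
move/leq_trans; apply; rewrite leq_mul2l /energy; apply/orP; right.
apply: leq_sum => t _; rewrite -mulnSr mulnC expnM leq_exp2r //.
exact: translate_pairs_le_dcorr.
Qed.

Lemma popular_translatesP t : t \in popular_translates ->
  exists2 a, a \in L & exists2 a', a' \in L & is_translate a a' t.
Proof.
rewrite inE /= => /andP[_]; rewrite lt0n sum_nat_eq0 => /forall_inPn[a aL].
by rewrite sum_nat_eq0 => /forall_inPn[a' a'L]; rewrite eqb0 negbK; exists a => //; exists a'.
Qed.
End Translates.

Section Sampling.
Variables (G : zmodType) (R : realFieldType) (A B : {fset G}) (m : nat).
Local Notation tuple := {ffun 'I_m.+1 -> A}.
Local Notation n := (#|` A|%:R : R).
Local Notation f x := ((conv A B x)%:R : R).

Definition indicator (x : G) : R := (x \in B)%:R.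

Definition sample_conv (a : tuple) (x : G) : R :=
  n / m.+1%:R * \sum_i indicator (x - val (a i)).

Definition sample_err (a : tuple) : R :=
  \sum_(x <- sumset A B) (f x - sample_conv a x) ^+ 2.

Definition sample_var : R := n ^+ 2 * #|` B|%:R / m.+1%:R.

Definition good_tuples : {set tuple} := [set a | sample_err a <= 2 * sample_var].

Lemma conv_indicatorE x : f x = \sum_(y : A) indicator (x - val y).
Proof. by rewrite convE natr_sum big_seq_fsetE. Qed.

Lemma indicator_eq0 x (y : A) : x \notin sumset A B -> indicator (x - val y) = 0.
Proof.
move=> xS; rewrite /indicator; case: (boolP (_ \in B)) => // xyB.
by move: xS; rewrite -[x](subrK (val y)) addrC mem_sumset ?fsvalP.
Qed.

Lemma conv_eq0 x : x \notin sumset A B -> f x = 0.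
Proof. by move=> xS; rewrite conv_indicatorE big1 // => y _; apply: indicator_eq0. Qed.

Lemma sample_conv_eq0 a x : x \notin sumset A B -> sample_conv a x = 0.
Proof. by move=> xS; rewrite /sample_conv big1 ?mulr0 // => i _; apply: indicator_eq0. Qed.

Definition sample_dev (x : G) (y : A) : R :=
  n / m.+1%:R * indicator (x - val y) - f x / m.+1%:R.

Lemma sum_sample_dev x : \sum_y sample_dev x y = 0.
Proof.
rewrite sumrB -mulr_sumr -conv_indicatorE sumr_const -cardfE.
by rewrite -[_ / _ *+ _]mulr_natr; ring.
Qed.

Lemma conv_sub_sample_conv a x : f x - sample_conv a x = - \sum_i sample_dev x (a i).
Proof.
rewrite sumrB -mulr_sumr sumr_const card_ord -[_ / _ *+ _]mulr_natr.
by rewrite divfK ?pnatr_eq0 // opprB.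
Qed.

(* As the deviations sum to zero, their square sum is their inner product with the
   first term [c * indicator _], which dominates them. *)
Lemma sum_sample_dev_sqr x : \sum_y sample_dev x y ^+ 2 <= (n / m.+1%:R) ^+ 2 * f x.
Proof.
set c := n / m.+1%:R.
have -> : \sum_y sample_dev x y ^+ 2 = \sum_y sample_dev x y * (c * indicator (x - val y)).
  transitivity (\sum_y sample_dev x y * (c * indicator (x - val y))
                  - (\sum_y sample_dev x y) * (f x / m.+1%:R)).
    by rewrite mulr_suml -sumrB; apply: eq_bigr => y _; rewrite /sample_dev -/c; ring.
  by rewrite sum_sample_dev mul0r subr0.
rewrite conv_indicatorE mulr_sumr; apply: ler_sum => y _.
rewrite /sample_dev -/c /indicator; case: (_ \in B); last by rewrite !mulr0.
by rewrite !mulr1 expr2 ler_wpM2r ?divr_ge0 // gerBl divr_ge0.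
Qed.

Lemma sum_sample_err_at x :
  \sum_(a : tuple) (f x - sample_conv a x) ^+ 2 <= n ^+ m.+2 / m.+1%:R * f x.
Proof.
under eq_bigr do rewrite conv_sub_sample_conv sqrrN.
rewrite sum_ffun_sqr_sum ?sum_sample_dev // card_ord -cardfE.
apply: le_trans (_ : (n / m.+1%:R) ^+ 2 * f x * n ^+ m *+ m.+1 <= _).
  by rewrite lerMn2r ler_wpM2r ?exprn_ge0 ?sum_sample_dev_sqr.
rewrite -mulr_natr le_eqVlt; apply/orP; left; apply/eqP.
by rewrite !exprS; field; rewrite addrC natr1 pnatr_eq0.
Qed.

Lemma sum_sample_err : \sum_(a : tuple) sample_err a <= n ^+ m.+1 * sample_var.
Proof.
rewrite /sample_err exchange_big /=.
apply: le_trans (_ : \sum_(x <- sumset A B) n ^+ m.+2 / m.+1%:R * f x <= _).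
  by apply: ler_sum => x _; apply: sum_sample_err_at.
rewrite -mulr_sumr -natr_sum sum_conv natrM /sample_var le_eqVlt; apply/orP; left.
by apply/eqP; rewrite !exprS; field; rewrite addrC natr1 pnatr_eq0.
Qed.

Lemma card_good_tuples : 0 < sample_var -> (#|` A| ^ m.+1 <= 2 * #|good_tuples|)%N.
Proof.
move=> var_gt0.
have card_bad : (2 * #|~: good_tuples| <= #|` A| ^ m.+1)%N.
  rewrite -(ler_nat R) -(ler_pM2r var_gt0) natrX; apply: le_trans sum_sample_err.
  have -> : ~: good_tuples = [set a | 2 * sample_var < sample_err a].
    by apply/setP => a; rewrite !inE -ltNge.
  rewrite natrM mulrAC mulr_natr; apply: ler_card_gt_sum => a.
  by apply: sumr_ge0 => x _; apply: sqr_ge0.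
have := cardsC good_tuples; rewrite card_ffun card_ord -cardfE.
lia.
Qed.

Lemma shift_sq_le_sample_err a a' t :
  is_translate a a' t -> shift_sq R A B t <= 2 * sample_err a + 2 * sample_err a'.
Proof.
move=> /forallP aa't.
have conv_translate x : sample_conv a x = sample_conv a' (x + t).
  rewrite /sample_conv; congr (_ * _); apply: eq_bigr => i _.
  by rewrite (eqP (aa't i)) opprD addrACA subrr addr0.
apply: le_trans (_ : \sum_(x <- sumset A B `|` [fset z - t | z in sumset A B])
    (2 * (f x - sample_conv a x) ^+ 2 + 2 * (f (x + t) - sample_conv a' (x + t)) ^+ 2) <= _).
  apply: ler_sum => x _; rewrite real_normK ?num_real // -subr_ge0 conv_translate.
  set u := f x - _; set w := f (x + t) - _.
  have -> : 2 * u ^+ 2 + 2 * w ^+ 2 - (f x - f (x + t)) ^+ 2 = (u + w) ^+ 2 by rewrite /u /w; ring.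
  exact: sqr_ge0.
have err_supp a'' y : y \notin sumset A B -> (f y - sample_conv a'' y) ^+ 2 = 0.
  by move=> yS; rewrite conv_eq0 // sample_conv_eq0 // subr0 expr0n.
rewrite big_split /= -!mulr_sumr lerD // ler_pM2l //.
  by apply: ler_sum_support => [y|y /err_supp]; first exact: sqr_ge0.
apply: (@ler_sum_support_shift _ _ _ _ _ (fun y => (f y - sample_conv a' y) ^+ 2)).
  by move=> y; apply: sqr_ge0.
by move=> y /err_supp.
Qed.

Lemma shift_sq_popular t :
  t \in popular_translates good_tuples -> shift_sq R A B t <= 8 * sample_var.
Proof.
move=> /popular_translatesP[a]; rewrite inE => a_good [a']; rewrite inE => a'_good aa't.
apply: le_trans (shift_sq_le_sample_err aa't) _.
have -> : 8 * sample_var = 2 * (2 * sample_var) + 2 * (2 * sample_var) by ring.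
by rewrite lerD // ler_pM2l.
Qed.
End Sampling.

Lemma popular_lower_bound (R : realFieldType) (m : nat) (n d K M l P s E : R) :
  0 < n -> 0 < K -> 0 < M -> 0 <= d -> 0 <= P ->
  n ^+ m.+1 <= 2 * l -> l ^+ 2 <= d ^+ m * P -> P ^+ 2 <= s * E -> d <= K * n ->
  E = M * n ^+ (2 * m + 3) / K ^+ (2 * m + 1) -> K * n / (16 * M) <= s.
Proof.
move=> n_gt0 K_gt0 M_gt0 d_ge0 P_ge0 nl ldP PE dKn E_def.
have ler_sqr (x y : R) : x <= y -> 0 <= x -> x ^+ 2 <= y ^+ 2.
  by move=> xy x_ge0; apply: lerXn2r; rewrite // nnegrE (le_trans x_ge0).
have dm_le : d ^+ m <= K ^+ m * n ^+ m.
  by rewrite -exprMn; apply: lerXn2r; rewrite // nnegrE mulr_ge0 ?ltW.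
rewrite exprSr in nl.
have {}E_def : E = M * ((n ^+ m) ^+ 2 * n ^+ 3) / ((K ^+ m) ^+ 2 * K).
  by rewrite E_def -!exprM -exprD -exprSr; congr (_ * _ ^+ _ / _ ^+ _); lia.
have r_gt0 : 0 < n ^+ m by rewrite exprn_gt0.
have k_gt0 : 0 < K ^+ m by rewrite exprn_gt0.
move: (n ^+ m) (K ^+ m) (d ^+ m) r_gt0 k_gt0 nl dm_le ldP E_def PE.
move=> r k D r_gt0 k_gt0 nl dm_le ldP -> PE.
have P_lb : r * n ^+ 2 <= 4 * k * P.
  rewrite -(ler_pM2l r_gt0).
  have -> : r * (r * n ^+ 2) = (r * n) ^+ 2 by ring.
  apply: (le_trans (ler_sqr _ _ nl (mulr_ge0 (ltW r_gt0) (ltW n_gt0)))).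
  have -> : (2 * l) ^+ 2 = 4 * l ^+ 2 by ring.
  have -> : r * (4 * k * P) = 4 * (k * r * P) by ring.
  by rewrite ler_pM2l // (le_trans ldP) // ler_wpM2r.
have P_lb_sqr := ler_sqr _ _ P_lb (mulr_ge0 (ltW r_gt0) (exprn_ge0 2 (ltW n_gt0))).
have : (r ^+ 2 * n ^+ 3) * n <= (r ^+ 2 * n ^+ 3) * (16 * s * M / K).
  have -> : r ^+ 2 * n ^+ 3 * n = (r * n ^+ 2) ^+ 2 by ring.
  apply: (le_trans P_lb_sqr).
  have -> : (4 * k * P) ^+ 2 = 16 * k ^+ 2 * P ^+ 2 by ring.
  have -> : r ^+ 2 * n ^+ 3 * (16 * s * M / K)
    = 16 * k ^+ 2 * (s * (M * (r ^+ 2 * n ^+ 3) / (k ^+ 2 * K))).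
    by field; rewrite !gt_eqF ?exprn_gt0.
  by rewrite ler_pM2l ?mulr_gt0 ?exprn_gt0.
rewrite ler_pM2l ?mulr_gt0 ?exprn_gt0 // ler_pdivlMr // => nK_le.
by rewrite ler_pdivrMr ?mulr_gt0 //; lra.
Qed.

Unset Implicit Arguments.
Theorem theorem20 (G : zmodType) (R : realFieldType) (A B : {fset G})
  (k : nat) (K M : R) :
  A != fset0 -> B != fset0 -> (1 <= k)%N -> 0 < K -> 0 < M ->
  (#|` diffset A|)%:R <= K * (#|` A|)%:R ->
  ((energy (2 * k + 2) A)%:R : R)
    = M * (#|` A|)%:R ^+ (2 * k + 3) / K ^+ (2 * k + 1) ->
  exists (T : {fset G}) (u : G),
    [/\ T `<=` diffset A,
        K * (#|` A|)%:R / (16 * M) <= (#|` T|)%:R &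
        forall t, t \in [fset s + u | s in T] ->
          shift_sq R A B t <= 32 * (#|` A|)%:R ^+ 2 * (#|` B|)%:R / k%:R].
Proof.
move=> A_neq0 B_neq0 k_gt0 K_gt0 M_gt0 diffA_le energyE.
have nA_gt0 : 0 < #|` A|%:R :> R by rewrite ltr0n cardfs_gt0.
have var_gt0 : 0 < sample_var R A B k.
  by rewrite divr_gt0 ?mulr_gt0 ?exprn_gt0 // ltr0n cardfs_gt0.
set L := good_tuples R A B k.
exists (popular_translates L), 0; split.
- exact: fset_sub.
- apply: (popular_lower_bound (l := #|L|%:R)
    (P := (\sum_(t <- diffset A) translate_pairs L t)%:R)
    nA_gt0 K_gt0 M_gt0 (ler0n _ _) (ler0n _ _) _ _ _ diffA_le energyE).
  + by rewrite -natrX -natrM ler_nat card_good_tuples.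
  + by rewrite -!natrX -natrM ler_nat card_sqr_le_translate_pairs.
  + by rewrite -natrX -natrM ler_nat sqr_sum_translate_pairs_le.
- move=> _ /imfsetP[t t_popular ->]; rewrite addr0.
  apply: (le_trans (shift_sq_popular t_popular)).
  pose X : R := #|` A|%:R ^+ 2 * #|` B|%:R.
  have -> : 32 * #|` A|%:R ^+ 2 * #|` B|%:R / k%:R = 32 / k%:R * X by rewrite /X; ring.
  have -> : 8 * sample_var R A B k = 8 / k.+1%:R * X by rewrite /sample_var -/X; ring.
  rewrite ler_wpM2r ?mulr_ge0 ?exprn_ge0 //.
  rewrite ler_pdivrMr ?ltr0n // mulrAC ler_pdivlMr ?ltr0n //.
  by rewrite -!natrM ler_nat; lia.
Qed.
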